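(* Let $U\subseteq\mathbb{R}^4$ be open with coordinates $(x^1,x^2,x^3,x^4)$ and let $a,b,p,q,s$ be real constants with $a^2+b^2\neq0$. Consider the Lorentzian metric $$g=2\,dx^1dx^4+(dx^2)^2+(dx^3)^2+\Big(x^4\big(a(x^2)^2+b(x^3)^2\big)+p(x^2)^2+2qx^2x^3+s(x^3)^2\Big)(dx^4)^2$$ on $U$. Then: (a) $(U,g)$ is Einstein if and only if it is Ricci flat, if and only if $b=-a$ and $s=-p$; (b) $(U,g)$ is conformally flat if and only if $b=a$, $s=p$ and $q=0$.
   Context: Einstein means $\varrho=c\,g$ for a real constant $c$, where $\varrho$ is the Ricci tensor; Ricci flat means $\varrho=0$; conformally flat means the Weyl tensor $W_{ijkh}=R_{ijkh}-\frac12(g_{ik}\varrho_{jh}+g_{jh}\varrho_{ik}-g_{ih}\varrho_{jk}-g_{jk}\varrho_{ih})+\frac{\tau}{6}(g_{ik}g_{jh}-g_{ih}g_{jk})$ vanishes identically, $\tau$ the scalar curvature. *)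

From HB Require Import structures.
From mathcomp Require Import all_boot all_order all_algebra.
From mathcomp Require Import all_classical all_reals all_analysis.
Set Implicit Arguments. Unset Strict Implicit. Unset Printing Implicit Defensive.
Import Order.TTheory GRing.Theory Num.Theory.
Import numFieldNormedType.Exports.
Local Open Scope ring_scope.
Local Open Scope classical_set_scope.

Section Riem.
Variable R : realType.

(* Points of R^4 are row vectors; coordinate x^(k+1) is x 0 k, k : 'I_4. *)
Definition pt := 'rV[R]_4.

Definition evec (i : 'I_4) : pt := delta_mx 0 i.

Definition partial (i : 'I_4) (f : pt -> R) (x : pt) : R := 'D_(evec i) f x.

Definition metric := 'I_4 -> 'I_4 -> pt -> R.

Definition gmat (g : metric) (x : pt) : 'M[R]_4 := \matrix_(i, j) g i j x.

Definition ginv (g : metric) (i j : 'I_4) (x : pt) : R := invmx (gmat g x) i j.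

Definition christoffel (g : metric) (k i j : 'I_4) (x : pt) : R :=
  2^-1 * \sum_(l < 4) ginv g k l x *
    (partial i (g j l) x + partial j (g i l) x - partial l (g i j) x).

(* R(d_i, d_j) d_k = \sum_m Rup i j k m d_m, with
   R(X,Y) = nabla_X nabla_Y - nabla_Y nabla_X - nabla_[X,Y] *)
Definition Rup (g : metric) (i j k m : 'I_4) (x : pt) : R :=
  partial i (christoffel g m j k) x - partial j (christoffel g m i k) x
  + \sum_(l < 4) (christoffel g l j k x * christoffel g m i l x
                  - christoffel g l i k x * christoffel g m j l x).

(* R_ijkh := g(R(d_i,d_j) d_h, d_k); with this convention the space forms
   satisfy R_ijkh = kappa (g_ik g_jh - g_ih g_jk), consistent with the Weyl
   tensor formula of the paper, and rho_jh = g^ik R_ijkh. *)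
Definition Rm (g : metric) (i j k h : 'I_4) (x : pt) : R :=
  \sum_(m < 4) Rup g i j h m x * g m k x.

Definition ricci (g : metric) (j h : 'I_4) (x : pt) : R :=
  \sum_(i < 4) \sum_(k < 4) ginv g i k x * Rm g i j k h x.

Definition scal (g : metric) (x : pt) : R :=
  \sum_(j < 4) \sum_(h < 4) ginv g j h x * ricci g j h x.

Definition weyl (g : metric) (i j k h : 'I_4) (x : pt) : R :=
  Rm g i j k h x
  - 2^-1 * (g i k x * ricci g j h x + g j h x * ricci g i k x
            - g i h x * ricci g j k x - g j k x * ricci g i h x)
  + scal g x / 6%:R * (g i k x * g j h x - g i h x * g j k x).

Definition Einstein (g : metric) (U : set pt) : Prop :=
  exists c : R, forall x, U x -> forall i j, ricci g i j x = c * g i j x.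

Definition RicciFlat (g : metric) (U : set pt) : Prop :=
  forall x, U x -> forall i j, ricci g i j x = 0.

Definition ConformallyFlat (g : metric) (U : set pt) : Prop :=
  forall x, U x -> forall i j k h, weyl g i j k h x = 0.

(* The metric of the theorem:
   g = 2 dx^1 dx^4 + (dx^2)^2 + (dx^3)^2 + F (dx^4)^2, with
   F = x^4 (a (x^2)^2 + b (x^3)^2) + p (x^2)^2 + 2 q x^2 x^3 + s (x^3)^2.
   Indices 0,1,2,3 correspond to x^1, x^2, x^3, x^4. *)
Definition Fcoef (a b p q s : R) (x : pt) : R :=
  x 0 3 * (a * x 0 1 ^+ 2 + b * x 0 2 ^+ 2)
  + p * x 0 1 ^+ 2 + 2%:R * q * x 0 1 * x 0 2 + s * x 0 2 ^+ 2.

Definition gW (a b p q s : R) : metric := fun i j x =>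
  if ((val i == 0%N) && (val j == 3%N)) || ((val i == 3%N) && (val j == 0%N)) then 1
  else if (val i == 1%N) && (val j == 1%N) then 1
  else if (val i == 2%N) && (val j == 2%N) then 1
  else if (val i == 3%N) && (val j == 3%N) then Fcoef a b p q s x
  else 0.

End Riem.

From HB Require Import structures.
From mathcomp Require Import all_boot all_order all_algebra.
From mathcomp Require Import all_classical all_reals all_analysis.
From mathcomp Require Import ring lra.
Set Implicit Arguments.
Unset Strict Implicit.
Unset Printing Implicit Defensive.

Import Order.TTheory GRing.Theory Num.Theory.
Import numFieldNormedType.Exports.
Local Open Scope ring_scope.
Local Open Scope classical_set_scope.

(* The metric is a pp-wave: its only non-constant component is g_44 = F, and F
   does not depend on x^1.  Hence the Christoffel symbols are linear in dF and the
   curvature is linear in the Hessian of F; the Ricci tensor reduces to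
   rho_44 = -(F_22 + F_33)/2 = -((a + b) x^4 + p + s) and the scalar curvature
   vanishes.  So an Einstein constant must be 0, Ricci flatness means that an affine
   function of x^4 vanishes on U, and the Weyl tensor is governed by
   W_2424 = ((b - a) x^4 + s - p)/2 and W_2434 = -q.  Since U is open, x^4 takes two
   distinct values on U, which separates the coefficients. *)

Lemma is_derive_coord (R : realType) m n (x v : 'M[R]_(m, n)) i j :
  is_derive x v (fun y : 'M[R]_(m, n) => y i j) (v i j).
Proof.
have hd : derivable (@id 'M[R]_(m, n)) x v by exact: derivable_id.
split; first by move/derivable_mxP: hd => /(_ i j).
have := derive_mx hd; rewrite derive_val => /(congr1 (fun M : 'M[R]_(m, n) => M i j)).
by rewrite mxE => ->.
Qed.

Lemma open_shift (R : realType) (V : normedModType R) (U : set V) (x v : V) :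
  open U -> U x -> exists2 h : R, h != 0 & U (x + h *: v).
Proof.
move=> oU Ux.
have shift_cvg : (fun h : R => x + h *: v) @ (0 : R) --> x.
  by rewrite -[x in _ --> x]addr0 -(scale0r v); apply: cvgD; [exact: cvg_cst|exact: cvgZr_tmp].
have /nbhs_norm0P [e /= e0 He] := shift_cvg U (open_nbhs_nbhs (conj oU Ux)).
exists (e / 2); first by rewrite mulf_neq0 // ?gt_eqF // invr_gt0.
apply: He => /=; rewrite ger0_norm; last by rewrite divr_ge0 // ltW.
by rewrite ltr_pdivrMr // ltr_pMr // ltr1n.
Qed.

Lemma coord_affine_eq0 (R : realType) n (U : set 'rV[R]_n) (j : 'I_n) (c d : R) :
  open U -> U !=set0 -> (forall x, U x -> c * x 0 j + d = 0) -> c = 0 /\ d = 0.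
Proof.
move=> oU [x Ux] affU.
have [h h0 Uxh] := open_shift (delta_mx 0 j) oU Ux.
have Ex := affU _ Ux; have := affU _ Uxh; rewrite !mxE !eqxx mulr1 => Exh.
have /eqP : c * h = 0 by rewrite -[RHS](subrr 0) -{1}Exh -Ex; ring.
rewrite mulf_eq0 (negbTE h0) orbF => /eqP c0.
by split => //; rewrite -Ex c0 mul0r add0r.
Qed.

Notation o0 := (@Ordinal 4 0 isT).
Notation o1 := (@Ordinal 4 1 isT).
Notation o2 := (@Ordinal 4 2 isT).
Notation o3 := (@Ordinal 4 3 isT).

Lemma ord4_ind (P : 'I_4 -> Prop) : P o0 -> P o1 -> P o2 -> P o3 -> forall i, P i.
Proof.
move=> P0 P1 P2 P3 [[|[|[|[|n]]]] lt_n4] //.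
- by rewrite (_ : Ordinal _ = o0) //; apply: val_inj.
- by rewrite (_ : Ordinal _ = o1) //; apply: val_inj.
- by rewrite (_ : Ordinal _ = o2) //; apply: val_inj.
- by rewrite (_ : Ordinal _ = o3) //; apply: val_inj.
Qed.

Lemma sum_ord4 (V : nmodType) (F : 'I_4 -> V) :
  \sum_(i < 4) F i = F o0 + F o1 + F o2 + F o3.
Proof.
rewrite !big_ord_recr big_ord0 /= add0r.
by congr (_ + _ + _ + _); congr F; apply: val_inj.
Qed.

Section PPWave.
Variable R : realType.
Variables a b p q s : R.
Implicit Types (x y v : pt R) (i j k h m : 'I_4).

Local Notation F := (Fcoef a b p q s).
Local Notation g := (gW a b p q s).

Definition kron i (n : nat) : R := if val i == n then 1 else 0.

Lemma evecE i (n : 'I_4) : evec R i 0 n = kron i n.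
Proof.
rewrite /evec mxE eqxx /= /kron.
have -> : (n == i) = (val i == val n) by rewrite eq_sym.
by case: (val i == val n).
Qed.

Lemma is_derive_add (f1 f2 : pt R -> R) x v d1 d2 :
  is_derive x v f1 d1 -> is_derive x v f2 d2 ->
  is_derive x v (fun y => f1 y + f2 y) (d1 + d2).
Proof. exact: is_deriveD. Qed.

Lemma is_derive_sub (f1 f2 : pt R -> R) x v d1 d2 :
  is_derive x v f1 d1 -> is_derive x v f2 d2 ->
  is_derive x v (fun y => f1 y - f2 y) (d1 - d2).
Proof. exact: is_deriveB. Qed.

Lemma is_derive_mul (f1 f2 : pt R -> R) x v d1 d2 :
  is_derive x v f1 d1 -> is_derive x v f2 d2 ->
  is_derive x v (fun y => f1 y * f2 y) (f1 x * d2 + f2 x * d1).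
Proof. exact: is_deriveM. Qed.

Lemma is_derive_sqr (f : pt R -> R) x v d :
  is_derive x v f d -> is_derive x v (fun y => f y ^+ 2) (f x * d + f x * d).
Proof.
by move=> df; under eq_fun do rewrite expr2; exact: is_derive_mul.
Qed.

(* Instance search inside [apply:] may produce derivatives of the form [k *: d]. *)
Lemma scaleRE (k y : R) : k *: y = k * y.
Proof. by []. Qed.

Ltac derive_rules leaf := repeat first
 [ match goal with |- is_derive _ _ (fun y => @?A y + @?B y) _ => apply: (@is_derive_add A B) end
 | match goal with |- is_derive _ _ (fun y => @?A y - @?B y) _ => apply: (@is_derive_sub A B) end
 | match goal with |- is_derive _ _ (fun y => @?A y * @?B y) _ => apply: (@is_derive_mul A B) end
 | match goal with |- is_derive _ _ (fun y => @?A y ^+ 2) _ => apply: (@is_derive_sqr A) end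
 | apply: is_derive_coord
 | apply: is_derive_cst
 | leaf ].

Definition gradF i y : R :=
  kron i 1 * (2 * a * y 0 3 * y 0 1 + 2 * p * y 0 1 + 2 * q * y 0 2)
  + kron i 2 * (2 * b * y 0 3 * y 0 2 + 2 * q * y 0 1 + 2 * s * y 0 2)
  + kron i 3 * (a * y 0 1 ^+ 2 + b * y 0 2 ^+ 2).

Definition hessF i j y : R :=
  kron j 1 * (kron i 1 * (2 * a * y 0 3 + 2 * p) + kron i 2 * (2 * q) + kron i 3 * (2 * a * y 0 1))
  + kron j 2 * (kron i 1 * (2 * q) + kron i 2 * (2 * b * y 0 3 + 2 * s) + kron i 3 * (2 * b * y 0 2))
  + kron j 3 * (kron i 1 * (2 * a * y 0 1) + kron i 2 * (2 * b * y 0 2)).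

Instance is_derive_F i y : is_derive y (evec R i) F (gradF i y).
Proof.
rewrite /Fcoef; eapply is_derive_eq; first by derive_rules fail.
by rewrite !evecE /gradF; ring.
Qed.

Instance is_derive_gradF i j y : is_derive y (evec R i) (gradF j) (hessF i j y).
Proof.
rewrite {1}/gradF; eapply is_derive_eq; first by derive_rules fail.
by rewrite !evecE /hessF; ring.
Qed.

Definition eta i j : R :=
  kron i 0 * kron j 3 + kron i 3 * kron j 0 + kron i 1 * kron j 1 + kron i 2 * kron j 2.

Lemma gWE i j x : g i j x = eta i j + kron i 3 * kron j 3 * F x.
Proof.
case: i => [[|[|[|[|i]]]] lt_i4] //; case: j => [[|[|[|[|j]]]] lt_j4] //;
  by rewrite /gW /eta /kron /=; ring.
Qed.

Instance is_derive_gW k i j x : is_derive x (evec R k) (g i j) (kron i 3 * kron j 3 * gradF k x).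
Proof.
have -> : g i j = fun y => eta i j + kron i 3 * kron j 3 * F y.
  by apply/funext => y; rewrite gWE.
by eapply is_derive_eq; [derive_rules ltac:(apply: is_derive_F) | rewrite scaleRE; ring].
Qed.

Lemma partial_gW k i j x : partial k (g i j) x = kron i 3 * kron j 3 * gradF k x.
Proof. exact: derive_val. Qed.

Lemma ginv_gW k l x : ginv g k l x = eta k l - kron k 0 * kron l 0 * F x.
Proof.
set M := \matrix_(i, j) (eta i j - kron i 0 * kron j 0 * F x).
have gM : gmat g x *m M = 1%:M.
  apply/matrixP => i j; rewrite !mxE sum_ord4 !mxE !gWE /eta.
  by move: i j; apply: ord4_ind; apply: ord4_ind; rewrite /kron /=; ring.
have [g_unit _] := mulmx1_unit gM.
by rewrite /ginv -[invmx _](mulmx1) -gM mulKmx // mxE.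
Qed.

Lemma gradF0 x : gradF o0 x = 0.
Proof. by rewrite /gradF /kron /=; ring. Qed.

Lemma hessF0l j x : hessF o0 j x = 0.
Proof. by rewrite /hessF /kron /=; ring. Qed.

Lemma hessF0r j x : hessF j o0 x = 0.
Proof. by rewrite /hessF /kron /=; ring. Qed.

Definition GammaW m i j y : R :=
  2^-1 * (kron m 0 * (kron j 3 * gradF i y + kron i 3 * gradF j y - kron i 3 * kron j 3 * gradF o3 y)
          - (kron m 1 + kron m 2) * kron i 3 * kron j 3 * gradF m y).

Lemma christoffel_gW : christoffel g = GammaW.
Proof.
apply/funext => m; apply/funext => i; apply/funext => j; apply/funext => x.
rewrite /christoffel sum_ord4 !ginv_gW !partial_gW /GammaW /eta.
by move: m i j; do 3!apply: ord4_ind; rewrite /kron /= ?gradF0; ring.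
Qed.

Definition dGammaW k m i j y : R :=
  2^-1 * (kron m 0 * (kron j 3 * hessF k i y + kron i 3 * hessF k j y - kron i 3 * kron j 3 * hessF k o3 y)
          - (kron m 1 + kron m 2) * kron i 3 * kron j 3 * hessF k m y).

Instance is_derive_GammaW k m i j y : is_derive y (evec R k) (GammaW m i j) (dGammaW k m i j y).
Proof.
rewrite {1}/GammaW; eapply is_derive_eq.
  by derive_rules ltac:(apply: is_derive_gradF).
by rewrite /dGammaW !scaleRE; ring.
Qed.

Lemma Rup_gW i j k m x :
  Rup g i j k m x = dGammaW i m j k x - dGammaW j m i k x
    + \sum_(l < 4) (GammaW l j k x * GammaW m i l x - GammaW l i k x * GammaW m j l x).
Proof. by rewrite /Rup christoffel_gW /partial !derive_val. Qed.

Definition Rhalf i j h k x : R :=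
  2^-1 * (kron k 3 * (kron h 3 * hessF i j x + kron j 3 * hessF i h x - kron j 3 * kron h 3 * hessF i o3 x)
     - kron j 3 * kron h 3 * (kron k 1 * hessF i o1 x + kron k 2 * hessF i o2 x)).

Lemma Rm_gW i j k h x : Rm g i j k h x = Rhalf i j h k x - Rhalf j i h k x.
Proof.
rewrite /Rm sum_ord4 !Rup_gW !gWE !sum_ord4 /GammaW /dGammaW /Rhalf /eta.
by rewrite ?gradF0 ?hessF0l ?hessF0r /kron /=; ring.
Qed.

Lemma ricci_gW j h x :
  ricci g j h x = - (kron j 3 * kron h 3) * ((a + b) * x 0 3 + (p + s)).
Proof.
rewrite /ricci; under eq_bigr => i _ do under eq_bigr => k _ do rewrite ginv_gW Rm_gW.
by rewrite !sum_ord4 /eta /Rhalf ?hessF0l ?hessF0r /hessF /kron /=; field.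
Qed.

Lemma scal_gW x : scal g x = 0.
Proof.
rewrite /scal; under eq_bigr => i _ do under eq_bigr => k _ do rewrite ginv_gW ricci_gW.
by rewrite !sum_ord4 /eta /kron /=; ring.
Qed.

Lemma weyl_gW1313 x : weyl g o1 o3 o1 o3 x = ((b - a) * x 0 3 + (s - p)) / 2.
Proof.
by rewrite /weyl Rm_gW !ricci_gW scal_gW !gWE /Rhalf /eta /hessF /kron /=; field.
Qed.

Lemma weyl_gW1323 x : weyl g o1 o3 o2 o3 x = - q.
Proof.
by rewrite /weyl Rm_gW !ricci_gW scal_gW !gWE /Rhalf /eta /hessF /kron /=; field.
Qed.

Lemma weyl_gWN i j k h x : weyl g i j k h x = - weyl g j i k h x.
Proof.
rewrite /weyl !Rm_gW.
by move: (gW a b p q s) (ricci g) (scal g x) Rhalf => G Ric S Rh; ring.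
Qed.

Lemma weyl_gW_eq0_lt : b = a -> s = p -> q = 0 ->
  forall i j, (i < j)%N -> forall k h x, weyl g i j k h x = 0.
Proof.
move=> ba sp q0; apply: ord4_ind; apply: ord4_ind => //= _ k h x;
  rewrite /weyl Rm_gW !ricci_gW scal_gW !gWE /Rhalf /eta /hessF ba sp q0;
  by move: k h; apply: ord4_ind; apply: ord4_ind; rewrite /kron /=; field.
Qed.

Lemma weyl_gW_eq0 : b = a -> s = p -> q = 0 -> forall i j k h x, weyl g i j k h x = 0.
Proof.
move=> ba sp q0 i j k h x.
have [lt_ij|lt_ji|/val_inj <-] := ltngtP i j.
- exact: weyl_gW_eq0_lt.
- by rewrite weyl_gWN weyl_gW_eq0_lt ?oppr0.
- by have := weyl_gWN i i k h x; lra.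
Qed.

Lemma Einstein_gW_RicciFlat U : Einstein g U <-> RicciFlat g U.
Proof.
split=> [[c ric_c] x Ux i j | flat]; last by exists 0 => x Ux i j; rewrite mul0r flat.
have c0 : c = 0.
  have g03 : g o0 o3 x = 1 by [].
  by rewrite -[c]mulr1 -g03 -ric_c // ricci_gW /kron /=; ring.
by rewrite ric_c // c0 mul0r.
Qed.

Lemma RicciFlat_gW U : open U -> U !=set0 -> RicciFlat g U <-> b = - a /\ s = - p.
Proof.
move=> oU U0; split=> [flat | [ba sp] x _ i j].
  have [ab0 ps0] : a + b = 0 /\ p + s = 0.
    apply: (coord_affine_eq0 (j := 3) oU U0) => x Ux.
    have := flat x Ux o3 o3; rewrite ricci_gW /kron /= mulr1 mulN1r => /eqP.
    by rewrite oppr_eq0 => /eqP.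
  by split; lra.
by rewrite ricci_gW ba sp; ring.
Qed.

Lemma ConformallyFlat_gW U : open U -> U !=set0 ->
  ConformallyFlat g U <-> b = a /\ s = p /\ q = 0.
Proof.
move=> oU U0; split=> [cflat | [ba [sp q0]] x _ i j k h]; last exact: weyl_gW_eq0.
have [ba0 sp0] : b - a = 0 /\ s - p = 0.
  apply: (coord_affine_eq0 (j := 3) oU U0) => x Ux.
  have := cflat x Ux o1 o3 o1 o3; rewrite weyl_gW1313 => /eqP.
  by rewrite mulf_eq0 invr_eq0 pnatr_eq0 orbF => /eqP.
have [x Ux] := U0.
have := cflat x Ux o1 o3 o2 o3; rewrite weyl_gW1323.
by split; [|split]; lra.
Qed.

End PPWave.

Theorem mainTheorem2 (R : realType) (U : set (pt R)) (a b p q s : R) :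
  open U -> U !=set0 -> a ^+ 2 + b ^+ 2 != 0 ->
  ((Einstein (gW a b p q s) U <-> RicciFlat (gW a b p q s) U) /\
   (RicciFlat (gW a b p q s) U <-> (b = - a /\ s = - p))) /\
  (ConformallyFlat (gW a b p q s) U <-> (b = a /\ s = p /\ q = 0)).
Proof.
move=> oU U0 _.
split; first split.
- exact: Einstein_gW_RicciFlat.
- exact: RicciFlat_gW.
- exact: ConformallyFlat_gW.
Qed.
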